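(* Let $P$ be a causal logic program (possibly with default negation) and let $P'$ be its unlabelled version. Then: (1) if $I$ is a causal stable model of $P$, then $I^{cl}$ is a stable model of $P'$; (2) if $I'$ is a stable model of $P'$, then there is a unique causal stable model $I$ of $P$ such that $I'=I^{cl}$.
   Context: Causal values are down-sets of causal graphs (reflexively–transitively closed directed graphs on labels, ordered by reverse inclusion), with $0=\emptyset$ and $1$ the set of all causal graphs; $*$ = intersection, $+$ = union, $U\cdot U'={\downarrow}\{G\cdot G'\}$ with $G\cdot G'$ the closure of the graph with vertices $V\cup V'$ and edges $E\cup E'\cup(V\times V')$; a label $l$ denotes ${\downarrow}$ of the graph with only edge $(l,l)$. A causal logic program is a set of rules $t:H\leftarrow B_1,\dots,B_n$ with $t$ a label or $1$, $H$ an atom and $B_i$ literals $p$ or $\mathit{not}\ p$. A causal interpretation maps atoms to causal values; $I(\mathit{not}\ p)=1$ if $I(p)=0$, else $0$. For positive programs, $I$ is a model iff $(I(B_1)*\dots*I(B_n))\cdot t\subseteq I(H)$ for each rule, and the least model exists. The reduct $P^I$ is obtained by removing every rule containing a negative literal $B$ with $I(B)\ne 0$, then deleting all negative literals from the remaining rules. $I$ is a causal stable model of $P$ iff $I$ is the least causal model of $P^I$. The unlabelled version $P'$ replaces every label by $1$ (a standard normal program), and stable models of $P'$ are Gelfond–Lifschitz stable models viewed as maps to $\{0,1\}$. $I^{cl}(p)=0$ if $I(p)=0$, else $1$. *)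

From Stdlib Require Import List Relations.
Import ListNotations.
Set Implicit Arguments.

Section Causal.
Variables Lb Atom : Type.

(** A causal graph is represented by its edge relation on labels; it must be
    reflexively closed on its vertices (every vertex has a self-loop, so the
    vertex set is {x | G x x}) and transitively closed. *)
Definition cgraph := Lb -> Lb -> Prop.

Definition is_cgraph (G : cgraph) : Prop :=
  (forall x y, G x y -> G x x /\ G y y) /\
  (forall x y z, G x y -> G y z -> G x z).

(** Inclusion of edge sets. Causal graphs are ordered by REVERSE inclusion:
    G <= G'  iff  edges G' are included in edges G. *)
Definition gsub (G G' : cgraph) : Prop := forall x y, G x y -> G' x y.

(** Causal values: down-sets of causal graphs (w.r.t. reverse inclusion),
    i.e. sets of causal graphs closed under causal supergraphs. *)
Definition cvalue := cgraph -> Prop.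

Definition is_cvalue (U : cvalue) : Prop :=
  (forall G, U G -> is_cgraph G) /\
  (forall G G', U G -> is_cgraph G' -> gsub G G' -> U G').

Definition czero : cvalue := fun _ => False.
Definition cone : cvalue := fun G => is_cgraph G.
Definition cmeet (U V : cvalue) : cvalue := fun G => U G /\ V G.
Definition cjoin (U V : cvalue) : cvalue := fun G => U G \/ V G.

(** The value of a label l: down-closure of the graph with the only edge (l,l). *)
Definition clabel (l : Lb) : cvalue := fun G => is_cgraph G /\ G l l.

(** G . G' : reflexive-transitive closure of the graph with vertices V u V'
    and edges E u E' u (V x V'). *)
Definition gprod (G G' : cgraph) : cgraph :=
  clos_trans Lb (fun a b => G a b \/ G' a b \/ (G a a /\ G' b b)).

(** U . U' = down-closure of { G . G' | G in U, G' in U' }. *)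
Definition cprod (U V : cvalue) : cvalue :=
  fun G => is_cgraph G /\
    exists G1 G2, U G1 /\ V G2 /\ gsub (gprod G1 G2) G.

Inductive lit : Type := Pos (p : Atom) | Neg (p : Atom).

(** A rule  t : H <- B1,...,Bn ;  rlab = Some l for a label l, None for t = 1. *)
Record crule : Type := CRule { rlab : option Lb; rhead : Atom; rbody : list lit }.

Definition cinterp := Atom -> cvalue.

Definition is_cinterp (I : cinterp) : Prop := forall p, is_cvalue (I p).

Definition nonzero (U : cvalue) : Prop := exists G, U G.

Definition litval (I : cinterp) (l : lit) : cvalue :=
  match l with
  | Pos p => I p
  | Neg p => fun G => is_cgraph G /\ ~ nonzero (I p)   (* 1 if I p = 0, else 0 *)
  end.

Definition bodyval (I : cinterp) (b : list lit) : cvalue :=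
  fold_right (fun l acc => cmeet (litval I l) acc) cone b.

Definition labval (t : option Lb) : cvalue :=
  match t with Some l => clabel l | None => cone end.

Definition cmodel (P : crule -> Prop) (I : cinterp) : Prop :=
  forall r, P r -> forall G,
    cprod (bodyval I (rbody r)) (labval (rlab r)) G -> I (rhead r) G.

Definition cleast_model (P : crule -> Prop) (I : cinterp) : Prop :=
  is_cinterp I /\ cmodel P I /\
  forall J, is_cinterp J -> cmodel P J -> forall p G, I p G -> J p G.

Definition is_pos (l : lit) : bool := match l with Pos _ => true | Neg _ => false end.

Definition creduct (P : crule -> Prop) (I : cinterp) : crule -> Prop :=
  fun r' => exists r, P r /\
    (forall p, In (Neg p) (rbody r) -> ~ nonzero (I p)) /\
    r' = CRule (rlab r) (rhead r) (filter is_pos (rbody r)).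

Definition causal_stable (P : crule -> Prop) (I : cinterp) : Prop :=
  is_cinterp I /\ cleast_model (creduct P I) I.

Record nrule : Type := NRule { nhead : Atom; nbody : list lit }.

(** Unlabelled version P' (every label replaced by 1). *)
Definition unlabel (P : crule -> Prop) : nrule -> Prop :=
  fun n => exists r, P r /\ n = NRule (rhead r) (rbody r).

Definition lit_true (M : Atom -> Prop) (l : lit) : Prop :=
  match l with Pos p => M p | Neg p => ~ M p end.

Definition nmodel (Q : nrule -> Prop) (M : Atom -> Prop) : Prop :=
  forall n, Q n -> (forall l, In l (nbody n) -> lit_true M l) -> M (nhead n).

Definition nleast_model (Q : nrule -> Prop) (M : Atom -> Prop) : Prop :=
  nmodel Q M /\ forall N, nmodel Q N -> forall p, M p -> N p.

Definition gl_reduct (Q : nrule -> Prop) (M : Atom -> Prop) : nrule -> Prop :=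
  fun n' => exists n, Q n /\
    (forall p, In (Neg p) (nbody n) -> ~ M p) /\
    n' = NRule (nhead n) (filter is_pos (nbody n)).

Definition gl_stable (Q : nrule -> Prop) (M : Atom -> Prop) : Prop :=
  nleast_model (gl_reduct Q M) M.

Definition icl (I : cinterp) : Atom -> Prop := fun p => nonzero (I p).

End Causal.

(* The reduct P^I depends on I only through the atoms that I makes nonzero,
   and a positive causal program has a least model.  Over a fixed set of
   atoms M, the nonzero atoms of the least causal model of the reduct form
   the least model of the Gelfond-Lifschitz reduct of P' w.r.t. M: the full
   graph (every edge present) belongs to every nonzero causal value and so
   witnesses every rule application, while a classical model N lifts to the
   causal model sending N to 1 and everything else to 0.  Both directions
   then follow from the uniqueness of least models. *)
From Stdlib Require Import List Relations.

Set Implicit Arguments.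

Section CausalStable.
Variables Lb Atom : Type.

Definition gfull : cgraph Lb := fun _ _ => True.

Lemma is_cgraph_gfull : is_cgraph gfull.
Proof. split; unfold gfull; auto. Qed.

Lemma gsub_gfull (G : cgraph Lb) : gsub G gfull.
Proof. intros x y _; exact Logic.I. Qed.

Lemma cvalue_gfull (U : cvalue Lb) : is_cvalue U -> nonzero U -> U gfull.
Proof.
  intros [_ Hdown] [G HG].
  apply (Hdown G); [exact HG | apply is_cgraph_gfull | apply gsub_gfull].
Qed.

Lemma bodyval_gfull (I : cinterp Lb Atom) (b : list (lit Atom)) :
  (forall l, In l b -> litval I l gfull) -> bodyval I b gfull.
Proof.
  induction b as [|l b IH]; simpl; intros Hb.
  - apply is_cgraph_gfull.
  - split; auto.
Qed.

Lemma bodyval_Pos (I : cinterp Lb Atom) (b : list (lit Atom)) G q :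
  bodyval I b G -> In (Pos q) b -> I q G.
Proof.
  induction b as [|l b IH]; simpl; [tauto|].
  intros [Hl Hb] [E | Hq]; [subst l; exact Hl | auto].
Qed.

Lemma bodyval_mono (I J : cinterp Lb Atom) (b : list (lit Atom)) G :
  (forall p H, I p H -> J p H) -> (forall p, ~ In (Neg p) b) ->
  bodyval I b G -> bodyval J b G.
Proof.
  intros HIJ. induction b as [|[q|q] b IH]; simpl; intros Hneg; auto.
  - intros [Hq Hb]. split; [auto|].
    apply IH; [intros p Hp; apply (Hneg p); right; exact Hp | exact Hb].
  - exfalso. apply (Hneg q). left; reflexivity.
Qed.

Definition cpositive (R : crule Lb Atom -> Prop) : Prop :=
  forall r p, R r -> ~ In (Neg p) (rbody r).

Definition cleast (R : crule Lb Atom -> Prop) : cinterp Lb Atom :=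
  fun p G => is_cgraph G /\ forall J, is_cinterp J -> cmodel R J -> J p G.

Lemma cleast_modelP (R : crule Lb Atom -> Prop) :
  cpositive R -> cleast_model R (cleast R).
Proof.
  intros Rpos. split; [|split].
  - intros p. split; [intros G [HG _]; exact HG|].
    intros G G' [_ HG] HG' Hsub. split; [exact HG'|].
    intros J HJ HJR.
    apply (proj2 (HJ p) G); [exact (HG J HJ HJR) | exact HG' | exact Hsub].
  - intros r Hr G [HG [G1 [G2 [Hb [Ht Hsub]]]]]. split; [exact HG|].
    intros J HJ HJR. apply (HJR r Hr). split; [exact HG|].
    exists G1, G2. split; [|auto].
    apply (bodyval_mono (cleast R)); [|intros p; apply (Rpos r p Hr) | exact Hb].
    intros p G0 [_ H]. apply H; assumption.
  - intros J HJ HJR p G [_ H]. apply H; assumption.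
Qed.

Lemma cleast_model_unique (R : crule Lb Atom -> Prop) (I J : cinterp Lb Atom) :
  cleast_model R I -> cleast_model R J -> forall p G, I p G <-> J p G.
Proof.
  intros [HI [HIR HIleast]] [HJ [HJR HJleast]] p G.
  split; [apply HIleast | apply HJleast]; assumption.
Qed.

Lemma cleast_model_ext (R1 R2 : crule Lb Atom -> Prop) (I : cinterp Lb Atom) :
  (forall r, R1 r <-> R2 r) -> cleast_model R1 I -> cleast_model R2 I.
Proof.
  intros HR [HI [HIR Hleast]]. split; [exact HI | split].
  - intros r Hr. apply HIR, HR, Hr.
  - intros J HJ HJR. apply Hleast; [exact HJ|].
    intros r Hr. apply HJR, HR, Hr.
Qed.

Lemma nleast_model_unique (Q : nrule Atom -> Prop) (M N : Atom -> Prop) :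
  nleast_model Q M -> nleast_model Q N -> forall p, M p <-> N p.
Proof.
  intros [HM HMleast] [HN HNleast] p.
  split; [apply HMleast | apply HNleast]; assumption.
Qed.

Definition creduct_by (P : crule Lb Atom -> Prop) (M : Atom -> Prop)
    : crule Lb Atom -> Prop :=
  fun r' => exists r, P r /\
    (forall p, In (Neg p) (rbody r) -> ~ M p) /\
    r' = CRule (rlab r) (rhead r) (filter (@is_pos Atom) (rbody r)).

Lemma creduct_icl (P : crule Lb Atom -> Prop) (I : cinterp Lb Atom) :
  creduct P I = creduct_by P (icl I).
Proof. reflexivity. Qed.

Lemma creduct_by_ext (P : crule Lb Atom -> Prop) (M N : Atom -> Prop) :
  (forall p, M p <-> N p) -> forall r, creduct_by P M r <-> creduct_by P N r.
Proof.
  intros HMN r.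
  split; intros [r0 [Pr [Hneg ->]]]; exists r0;
    (split; [exact Pr | split; [|reflexivity]]);
    intros p Hp Hnp; apply (Hneg p Hp), HMN, Hnp.
Qed.

Lemma cpositive_creduct_by (P : crule Lb Atom -> Prop) (M : Atom -> Prop) :
  cpositive (creduct_by P M).
Proof.
  intros r p [r0 [_ [_ ->]]] Hp. simpl in Hp.
  apply filter_In in Hp. destruct Hp as [_ Hp]. discriminate Hp.
Qed.

Lemma cmodel_icl (P : crule Lb Atom -> Prop) (M : Atom -> Prop) (I : cinterp Lb Atom) :
  is_cinterp I -> cmodel (creduct_by P M) I ->
  nmodel (gl_reduct (unlabel P) M) (icl I).
Proof.
  intros HI HIR n [n0 [[r [Pr ->]] [Hneg ->]]] Hb. simpl in *.
  exists gfull.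
  apply (HIR (CRule (rlab r) (rhead r) (filter (@is_pos Atom) (rbody r))));
    [exists r; auto|].
  split; [apply is_cgraph_gfull|].
  exists gfull, gfull. split; [|split; [|apply gsub_gfull]].
  - apply bodyval_gfull. intros l Hl.
    pose proof (Hb l Hl) as Hlt.
    apply filter_In in Hl. destruct Hl as [_ Hpos].
    destruct l as [q|q]; [|discriminate Hpos].
    apply cvalue_gfull; [apply HI | exact Hlt].
  - destruct (rlab r); simpl;
      [split; [apply is_cgraph_gfull | exact Logic.I] | apply is_cgraph_gfull].
Qed.

Definition clift (N : Atom -> Prop) : cinterp Lb Atom :=
  fun p G => is_cgraph G /\ N p.

Lemma is_cinterp_clift (N : Atom -> Prop) : is_cinterp (clift N).
Proof.
  intros p. split; [intros G [HG _]; exact HG|].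
  intros G G' [_ Hp] HG' _. split; assumption.
Qed.

Lemma nmodel_clift (P : crule Lb Atom -> Prop) (M N : Atom -> Prop) :
  nmodel (gl_reduct (unlabel P) M) N -> cmodel (creduct_by P M) (clift N).
Proof.
  intros HN r [r0 [Pr [Hneg ->]]] G [HG [G1 [G2 [Hb _]]]]. simpl in *.
  split; [exact HG|].
  apply (HN (NRule (rhead r0) (filter (@is_pos Atom) (rbody r0)))).
  - exists (NRule (rhead r0) (rbody r0)). split; [exists r0; auto | auto].
  - simpl. intros l Hl.
    assert (Hpos := Hl). apply filter_In in Hpos. destruct Hpos as [_ Hpos].
    destruct l as [q|q]; [|discriminate Hpos].
    exact (proj2 (bodyval_Pos _ _ _ _ Hb Hl)).
Qed.

Lemma icl_cleast_model (P : crule Lb Atom -> Prop) (M : Atom -> Prop)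
    (I : cinterp Lb Atom) :
  cleast_model (creduct_by P M) I -> nleast_model (gl_reduct (unlabel P) M) (icl I).
Proof.
  intros [HI [HIR Hleast]]. split; [exact (cmodel_icl HI HIR)|].
  intros N HN p [G HG].
  exact (proj2 (Hleast _ (is_cinterp_clift N) (nmodel_clift HN) p G HG)).
Qed.

End CausalStable.

Theorem theorem6 (Lb Atom : Type) (P : crule Lb Atom -> Prop) :
  (forall I : cinterp Lb Atom,
     causal_stable P I -> gl_stable (unlabel P) (icl I)) /\
  (forall M : Atom -> Prop,
     gl_stable (unlabel P) M ->
     exists I : cinterp Lb Atom,
       causal_stable P I /\ (forall p, icl I p <-> M p) /\
       (forall J : cinterp Lb Atom,
          causal_stable P J -> (forall p, icl J p <-> M p) ->
          forall p G, J p G <-> I p G)).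
Proof.
  split.
  - intros I [_ HIleast]. rewrite creduct_icl in HIleast.
    exact (icl_cleast_model HIleast).
  - intros M HM.
    set (I := cleast (creduct_by P M)).
    assert (HIleast : cleast_model (creduct_by P M) I)
      by apply cleast_modelP, cpositive_creduct_by.
    assert (HIcl : forall p, icl I p <-> M p)
      by exact (nleast_model_unique (icl_cleast_model HIleast) HM).
    exists I. split; [|split; [exact HIcl|]].
    + split; [apply HIleast|]. rewrite creduct_icl.
      apply (cleast_model_ext (R1 := creduct_by P M)); [|exact HIleast].
      intros r. apply creduct_by_ext. intros p. symmetry. apply HIcl.
    + intros J [_ HJleast] HJcl. rewrite creduct_icl in HJleast.
      apply (cleast_model_unique (R := creduct_by P M)); [|exact HIleast].
      apply (cleast_model_ext (R1 := creduct_by P (icl J))); [|exact HJleast].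
      apply creduct_by_ext, HJcl.
Qed.
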